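(* Let $S$ be a $\Gamma$-hemiring and let $I$ be a prime h-ideal of $S$. Then for every $x\in S$ with $x\notin I$, $\langle x,\lambda_I\rangle=\lambda_I$.
   Context: A $\Gamma$-hemiring is a pair of additive commutative semigroups with zero $S$ and $\Gamma$ with a map $S\times\Gamma\times S\to S$, $(a,\alpha,b)\mapsto a\alpha b$, such that for all $a,b,c\in S$, $\alpha,\beta\in\Gamma$: $(a+b)\alpha c=a\alpha c+b\alpha c$; $a\alpha(b+c)=a\alpha b+a\alpha c$; $a(\alpha+\beta)b=a\alpha b+a\beta b$; $a\alpha(b\beta c)=(a\alpha b)\beta c$; $0\alpha a=0=a\alpha0$; $a0b=0=b0a$. An ideal of $S$ is a non-empty subset $A$ closed under addition with $s\gamma a\in A$ and $a\gamma s\in A$ for all $s\in S$, $a\in A$, $\gamma\in\Gamma$; it is an h-ideal if for all $x,z\in S$ and $a,b\in A$, $x+a+z=b+z$ implies $x\in A$. A proper h-ideal $I$ is prime if for any h-ideals $H,K$ of $S$, $H\Gamma K\subseteq I$ (where $H\Gamma K$ is the set of finite sums of elements $h\gamma k$, $h\in H$, $\gamma\in\Gamma$, $k\in K$) implies $H\subseteq I$ or $K\subseteq I$. $\lambda_I$ is the characteristic function of $I$. For a fuzzy subset $\mu:S\to[0,1]$ and $x\in S$, $\langle x,\mu\rangle(y)=\inf_{s\in S,\ \alpha,\gamma\in\Gamma}\mu(x\alpha s\gamma y)$. *)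

From mathcomp Require Import all_boot all_order all_algebra.
From mathcomp Require Import all_classical all_reals.
From mathcomp Require Import Rstruct.
From Stdlib Require Import Rdefinitions.

Set Implicit Arguments.
Unset Strict Implicit.
Unset Printing Implicit Defensive.

Local Open Scope classical_set_scope.

Record GammaHemiring := {
  car :> Type;
  gam : Type;
  sadd : car -> car -> car;
  szero : car;
  gadd : gam -> gam -> gam;
  gzero : gam;
  gmul : car -> gam -> car -> car;
  saddA : forall a b c, sadd a (sadd b c) = sadd (sadd a b) c;
  saddC : forall a b, sadd a b = sadd b a;
  sadd0 : forall a, sadd szero a = a;
  gaddA : forall a b c, gadd a (gadd b c) = gadd (gadd a b) c;
  gaddC : forall a b, gadd a b = gadd b a;
  gadd0 : forall a, gadd gzero a = a;
  gmulDl : forall a b c al, gmul (sadd a b) al c = sadd (gmul a al c) (gmul b al c);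
  gmulDr : forall a b c al, gmul a al (sadd b c) = sadd (gmul a al b) (gmul a al c);
  gmulDm : forall a b al be, gmul a (gadd al be) b = sadd (gmul a al b) (gmul a be b);
  gmulA : forall a b c al be, gmul a al (gmul b be c) = gmul (gmul a al b) be c;
  gmul0l : forall a al, gmul szero al a = szero;
  gmul0r : forall a al, gmul a al szero = szero;
  gmul0m : forall a b, gmul a gzero b = szero /\ gmul b gzero a = szero
}.

Section Defs.
Variable S : GammaHemiring.

Definition is_ideal (A : set S) : Prop :=
  (exists a, A a) /\
  (forall a b, A a -> A b -> A (sadd a b)) /\
  (forall s a g, A a -> A (gmul s g a) /\ A (gmul a g s)).

Definition is_hideal (A : set S) : Prop :=
  is_ideal A /\
  forall x z a b, A a -> A b -> sadd (sadd x a) z = sadd b z -> A x.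

(* H Gamma K : the set of finite (nonempty) sums of elements h g k *)
Inductive GProd (H K : set S) : S -> Prop :=
  | GProd_gen : forall h g k, H h -> K k -> GProd H K (gmul h g k)
  | GProd_add : forall u v, GProd H K u -> GProd H K v -> GProd H K (sadd u v).

Definition is_prime_hideal (I : set S) : Prop :=
  is_hideal I /\ I <> setT /\
  forall H K : set S, is_hideal H -> is_hideal K ->
    GProd H K `<=` I -> H `<=` I \/ K `<=` I.

Definition charfun (I : set S) : S -> R :=
  fun y => if pselect (I y) then 1%R else 0%R.

Definition xres (mu : S -> R) (x : S) : S -> R :=
  fun y => inf [set r | exists (s : S) (al ga : gam S),
                 r = mu (gmul (gmul x al s) ga y)].

End Defs.

From mathcomp Require Import all_boot all_classical all_reals.
From Stdlib Require Import Rdefinitions.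
From mathcomp Require Import all_order all_algebra Rstruct.

(* If y is outside the prime h-ideal I, then so is some x alpha s gamma y:
   otherwise every s gamma y lies in the right annihilator (relative to I) of
   the right ideal generated by x, which primeness forces into I because x is
   not in I; applying the same argument to S itself, which is not contained
   in I, then puts y into I.  Hence the infimum defining <x, lambda_I>(y)
   is 0 exactly when y is outside I, and 1 otherwise. *)

Set Implicit Arguments.
Unset Strict Implicit.
Unset Printing Implicit Defensive.

Local Open Scope classical_set_scope.
Local Open Scope ring_scope.
Import Order.TTheory.

Section Annihilators.
Variables (S : GammaHemiring) (I : set S).
Hypothesis hI : is_hideal I.

Definition right_closed (T : set S) := forall t s g, T t -> T (gmul t g s).
Definition left_closed (T : set S) := forall t s g, T t -> T (gmul s g t).

Definition annr (T : set S) : set S :=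
  fun k => forall t g, T t -> I (gmul t g k).
Definition annl (T : set S) : set S :=
  fun h => forall k g, T k -> I (gmul h g k).

Lemma ideal0 (A : set S) : is_ideal A -> A (szero S).
Proof.
case=> [[a Aa] [_ Amul]].
by have [+ _] := Amul (szero S) a (gzero S) Aa; rewrite gmul0l.
Qed.

Lemma annr_hideal (T : set S) : right_closed T -> is_hideal (annr T).
Proof.
move=> Tr; have [[_ [Iadd Imul]] Ih] := hI.
split; first split.
- exists (szero S) => t g _; rewrite gmul0r; exact: ideal0 (proj1 hI).
- split.
  + by move=> a b Ha Hb t g Tt; rewrite gmulDr; apply: Iadd; [apply: Ha|apply: Hb].
  + move=> s a g Ha; split=> t g' Tt; rewrite gmulA.
    * exact: Ha _ _ (Tr _ _ _ Tt).
    * exact: (proj2 (Imul s _ g (Ha _ _ Tt))).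
- move=> x z a b Ha Hb E t g Tt.
  apply: (Ih _ (gmul t g z) (gmul t g a) (gmul t g b)); [exact: Ha|exact: Hb|].
  by rewrite -!gmulDr E.
Qed.

Lemma annl_hideal (T : set S) : left_closed T -> is_hideal (annl T).
Proof.
move=> Tl; have [[_ [Iadd Imul]] Ih] := hI.
split; first split.
- exists (szero S) => t g _; rewrite gmul0l; exact: ideal0 (proj1 hI).
- split.
  + by move=> a b Ha Hb t g Tt; rewrite gmulDl; apply: Iadd; [apply: Ha|apply: Hb].
  + move=> s a g Ha; split=> t g' Tt; rewrite -gmulA.
    * exact: (proj1 (Imul s _ g (Ha _ _ Tt))).
    * exact: Ha _ _ (Tl _ _ _ Tt).
- move=> x z a b Ha Hb E t g Tt.
  apply: (Ih _ (gmul z g t) (gmul a g t) (gmul b g t)); [exact: Ha|exact: Hb|].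
  by rewrite -!gmulDl E.
Qed.

Lemma GProd_sub (H K : set S) :
  (forall h g k, H h -> K k -> I (gmul h g k)) -> GProd H K `<=` I.
Proof.
move=> HK u; elim=> [h g k Hh Kk|u1 u2 _ I1 _ I2]; first exact: HK.
exact: (proj1 (proj2 (proj1 hI))) I1 I2.
Qed.

End Annihilators.

Lemma prime_annr_sub (S : GammaHemiring) (I T : set S) :
  is_prime_hideal I -> right_closed T -> ~ T `<=` I -> annr I T `<=` I.
Proof.
move=> [hI [_ Iprime]] Tr nTI.
have hK := annr_hideal hI Tr.
have Kl : left_closed (annr I T).
  by move=> k s g Kk; exact: proj1 (proj2 (proj2 (proj1 hK)) s k g Kk).
have sub_annl : T `<=` annl I (annr I T) by move=> t Tt k g Kk; exact: Kk.
have := Iprime _ _ (annl_hideal hI Kl) hK (GProd_sub hI (fun h g k Hh Kk => Hh k g Kk)).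
by case=> // LI; case: nTI => t /sub_annl /LI.
Qed.

Lemma prime_hideal_gmul_notin (S : GammaHemiring) (I : set S) (x y : S) :
  is_prime_hideal I -> ~ I x -> ~ I y ->
  exists s al ga, ~ I (gmul (gmul x al s) ga y).
Proof.
move=> pI nIx nIy; apply: contrapT => Hn.
have all_in s al ga : I (gmul (gmul x al s) ga y).
  by apply: contrapT => Hc; apply: Hn; exists s, al, ga.
pose T := fun t => t = x \/ exists s al, t = gmul x al s.
have Tr : right_closed T.
  move=> t s g [->|[s' [al ->]]]; right; first by exists s, g.
  by exists (gmul s' g s), al; rewrite gmulA.
have annrT_sub := prime_annr_sub pI Tr (fun TI => nIx (TI x (or_introl erefl))).
have nSI : ~ setT `<=` I by rewrite subTset; exact: proj1 (proj2 pI).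
have annrS_sub := prime_annr_sub pI (fun _ _ _ _ => Logic.I) nSI.
apply/nIy/annrS_sub => s g _; apply: annrT_sub => t g' [->|[s' [al ->]]].
  by rewrite gmulA; apply: all_in.
by rewrite gmulA -(gmulA x); apply: all_in.
Qed.

Lemma xres_charfun_in (S : GammaHemiring) (I : set S) (x y : S) :
  is_ideal I -> I y -> xres (charfun I) x y = 1 :> R.
Proof.
move=> [_ [_ Imul]] Iy; rewrite /xres /charfun.
have xyI s al ga : I (gmul (gmul x al s) ga y) by exact: proj1 (Imul _ _ _ Iy).
set V := (X in inf X); suff -> : V = [set 1] by exact: inf1.
apply/seteqP; split => r /=.
  by move=> [s [al [ga ->]]]; case: pselect => // /(_ (xyI s al ga)).
by move=> ->; exists x, (gzero S), (gzero S); case: pselect => // /(_ (xyI _ _ _)).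
Qed.

Lemma xres_charfun_out (S : GammaHemiring) (I : set S) (x y : S) s al ga :
  ~ I (gmul (gmul x al s) ga y) -> xres (charfun I) x y = 0 :> R.
Proof.
move=> nI; rewrite /xres /charfun; set V := (X in inf X).
have V0 : V 0 by exists s, al, ga; case: pselect.
have lb0 : lbound V 0.
  by move=> r [s' [al' [ga' ->]]]; case: pselect => _ //; exact: ler01.
apply/eqP; rewrite eq_le.
by rewrite (ge_inf (ex_intro _ _ lb0) V0) (lb_le_inf (ex_intro _ _ V0) lb0).
Qed.

Theorem corollary3p23 (S : GammaHemiring) (I : set S) :
  is_prime_hideal I ->
  forall x : S, ~ I x -> xres (charfun I) x = charfun I.
Proof.
move=> pI x nIx; apply: funext => y.
rewrite {2}/charfun; case: pselect => Iy.
  exact: xres_charfun_in (proj1 (proj1 pI)) Iy.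
have [s [al [ga nI]]] := prime_hideal_gmul_notin pI nIx Iy.
exact: xres_charfun_out nI.
Qed.
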